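(* For every set of formulas $\Gamma$ and formula $\alpha$: $\Gamma\vdash_{LFI3}\alpha$ (derivability in the Hilbert calculus LFI3) if and only if $\Gamma\vDash_{LFI3}\alpha$ (consequence in the five-valued LFI3 matrix).
   Context: Formulas are built from a countable set of propositional variables using unary $\neg,\circ$ and binary $\land,\lor,\to$; $\alpha\leftrightarrow\beta:=(\alpha\to\beta)\land(\beta\to\alpha)$, $\sim\alpha:=\neg\alpha\land\circ\alpha$. mbC is the Hilbert calculus with the axiom schemas of a standard axiomatization of positive classical propositional logic in $\land,\lor,\to$, plus $\alpha\lor\neg\alpha$ and $\circ\alpha\to(\alpha\to(\neg\alpha\to\beta))$, with modus ponens as only rule. The Hilbert calculus LFI3 is mbC plus the schemas $\circ\alpha\lor(\alpha\land\neg\alpha)$, $\circ\circ\circ\alpha$, $\neg\neg\alpha\to\alpha$, $\alpha\to\neg\neg\alpha$, $\neg\circ\neg\alpha\leftrightarrow\neg\circ\alpha$, and: A1 $\neg(\alpha\land\beta)\leftrightarrow(\neg\alpha\lor\neg\beta)$; A2 $\neg(\alpha\lor\beta)\leftrightarrow(\neg\alpha\land\neg\beta)$; A3 $\neg(\alpha\to\beta)\leftrightarrow(\neg\beta\land(\sim\neg\alpha\lor\neg\circ\alpha))$; A4 $\neg\circ(\alpha\land\beta)\leftrightarrow(((\sim\neg\alpha\land\neg\circ\beta)\lor(\neg\circ\alpha\land\sim\neg\beta))\lor(\neg\circ\alpha\land\neg\circ\beta))$; A5 $\neg\circ(\alpha\lor\beta)\leftrightarrow(((\sim\alpha\land\neg\circ\beta)\lor(\neg\circ\alpha\land\sim\beta))\lor(\neg\circ\alpha\land\neg\circ\beta))$;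 A6 $\neg\circ(\alpha\to\beta)\leftrightarrow((\sim\neg\alpha\land\neg\circ\beta)\lor(\sim\neg\alpha\land\neg\circ\alpha\land\sim\beta)\lor(\neg\circ\alpha\land\neg\circ\beta)\lor(\sim\alpha\land\neg\circ\alpha\land\sim\beta))$. Semantics: on $\{0,1\}$ use Boolean $\land,\lor,\to,\sim$. Let $\mathbb{B}=\{x\in\{0,1\}^3: x_1\lor x_2=1,\ x_3\lor\sim(x_1\land x_2)=1\}$ (five elements). The LFI3 algebra on $\mathbb{B}$: $a\dot\land b=(a_1\land b_1,\ a_2\lor b_2,\ (\sim a_2\land b_3)\lor(a_3\land\sim b_2)\lor(a_3\land b_3))$; $a\dot\lor b=(a_1\lor b_1,\ a_2\land b_2,\ (\sim a_1\land b_3)\lor(a_3\land\sim b_1)\lor(a_3\land b_3))$; $a\dot\to b=(a_1\to b_1,\ b_2\land(\sim a_2\lor a_3),\ (\sim a_2\land b_3)\lor(\sim a_2\land a_3\land\sim b_1)\lor(a_3\land b_3)\lor(\sim a_1\land a_3\land\sim b_1))$; $\dot\neg a=(a_2,a_1,a_3)$; $\dot\circ a=(\sim(a_1\land a_2),a_3,a_3\land\sim(a_1\land a_2))$. Designated set $D=\{x:x_1=1\}$. $\Gamma\vDash_{LFI3}\alpha$ iff every homomorphism $h$ from formulas to this algebra with $h[\Gamma]\subseteq D$ has $h(\alpha)\in D$. *)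

From Stdlib Require Import Bool.

Inductive formula : Type :=
| Var : nat -> formula
| Neg : formula -> formula
| Circ : formula -> formula
| And : formula -> formula -> formula
| Or : formula -> formula -> formula
| Imp : formula -> formula -> formula.

Definition Iff (a b : formula) : formula := And (Imp a b) (Imp b a).
Definition Sneg (a : formula) : formula := And (Neg a) (Circ a).

Inductive LFI3_axiom : formula -> Prop :=
| Ax1 a b : LFI3_axiom (Imp a (Imp b a))
| Ax2 a b c : LFI3_axiom (Imp (Imp a b) (Imp (Imp a (Imp b c)) (Imp a c)))
| Ax3 a b : LFI3_axiom (Imp a (Imp b (And a b)))
| Ax4 a b : LFI3_axiom (Imp (And a b) a)
| Ax5 a b : LFI3_axiom (Imp (And a b) b)
| Ax6 a b : LFI3_axiom (Imp a (Or a b))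
| Ax7 a b : LFI3_axiom (Imp b (Or a b))
| Ax8 a b c : LFI3_axiom (Imp (Imp a c) (Imp (Imp b c) (Imp (Or a b) c)))
| Ax9 a b : LFI3_axiom (Or a (Imp a b))
| Ax10 a : LFI3_axiom (Or a (Neg a))
| Bc1 a b : LFI3_axiom (Imp (Circ a) (Imp a (Imp (Neg a) b)))
| Ci a : LFI3_axiom (Or (Circ a) (And a (Neg a)))
| Ccc a : LFI3_axiom (Circ (Circ (Circ a)))
| Cf a : LFI3_axiom (Imp (Neg (Neg a)) a)
| Ce a : LFI3_axiom (Imp a (Neg (Neg a)))
| NegCircNeg a : LFI3_axiom (Iff (Neg (Circ (Neg a))) (Neg (Circ a)))
| A1 a b : LFI3_axiom (Iff (Neg (And a b)) (Or (Neg a) (Neg b)))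
| A2 a b : LFI3_axiom (Iff (Neg (Or a b)) (And (Neg a) (Neg b)))
| A3 a b : LFI3_axiom
    (Iff (Neg (Imp a b)) (And (Neg b) (Or (Sneg (Neg a)) (Neg (Circ a)))))
| A4 a b : LFI3_axiom
    (Iff (Neg (Circ (And a b)))
         (Or (Or (And (Sneg (Neg a)) (Neg (Circ b)))
                 (And (Neg (Circ a)) (Sneg (Neg b))))
             (And (Neg (Circ a)) (Neg (Circ b)))))
| A5 a b : LFI3_axiom
    (Iff (Neg (Circ (Or a b)))
         (Or (Or (And (Sneg a) (Neg (Circ b)))
                 (And (Neg (Circ a)) (Sneg b)))
             (And (Neg (Circ a)) (Neg (Circ b)))))
| A6 a b : LFI3_axiom
    (Iff (Neg (Circ (Imp a b)))
         (Or (Or (Or (And (Sneg (Neg a)) (Neg (Circ b)))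
                     (And (And (Sneg (Neg a)) (Neg (Circ a))) (Sneg b)))
                 (And (Neg (Circ a)) (Neg (Circ b))))
             (And (And (Sneg a) (Neg (Circ a))) (Sneg b)))).

Inductive derivable (Gamma : formula -> Prop) : formula -> Prop :=
| d_hyp a : Gamma a -> derivable Gamma a
| d_ax a : LFI3_axiom a -> derivable Gamma a
| d_mp a b : derivable Gamma a -> derivable Gamma (Imp a b) -> derivable Gamma b.

Definition triple := (bool * bool * bool)%type.
Definition t1 (x : triple) : bool := let '(a, _, _) := x in a.
Definition t2 (x : triple) : bool := let '(_, b, _) := x in b.
Definition t3 (x : triple) : bool := let '(_, _, c) := x in c.

(* membership in the five-element universe B *)
Definition inB (x : triple) : Prop :=
  (t1 x || t2 x) = true /\ (t3 x || negb (t1 x && t2 x)) = true.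

Definition mk (a b c : bool) : triple := (a, b, c).

Definition sand (a b : triple) : triple :=
  mk (t1 a && t1 b) (t2 a || t2 b)
     ((negb (t2 a) && t3 b) || (t3 a && negb (t2 b)) || (t3 a && t3 b)).
Definition sor (a b : triple) : triple :=
  mk (t1 a || t1 b) (t2 a && t2 b)
     ((negb (t1 a) && t3 b) || (t3 a && negb (t1 b)) || (t3 a && t3 b)).
Definition simp (a b : triple) : triple :=
  mk (implb (t1 a) (t1 b)) (t2 b && (negb (t2 a) || t3 a))
     ((negb (t2 a) && t3 b) || (negb (t2 a) && t3 a && negb (t1 b))
      || (t3 a && t3 b) || (negb (t1 a) && t3 a && negb (t1 b))).
Definition sneg (a : triple) : triple := mk (t2 a) (t1 a) (t3 a).
Definition scirc (a : triple) : triple :=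
  mk (negb (t1 a && t2 a)) (t3 a) (t3 a && negb (t1 a && t2 a)).

Fixpoint eval (v : nat -> triple) (f : formula) : triple :=
  match f with
  | Var n => v n
  | Neg a => sneg (eval v a)
  | Circ a => scirc (eval v a)
  | And a b => sand (eval v a) (eval v b)
  | Or a b => sor (eval v a) (eval v b)
  | Imp a b => simp (eval v a) (eval v b)
  end.

Definition designated (x : triple) : Prop := t1 x = true.

Definition valuation (v : nat -> triple) : Prop := forall n, inB (v n).

Definition models (Gamma : formula -> Prop) (a : formula) : Prop :=
  forall v, valuation v ->
    (forall g, Gamma g -> designated (eval v g)) -> designated (eval v a).

(* Soundness: the five-element set B is a subalgebra, every axiom takes a
   designated value on B, and modus ponens preserves designation.
   Completeness: if Gamma does not derive a, enumerate the formulas and extend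
   Gamma to a theory T that is maximal among the theories not deriving a.
   Membership in T is then classical on the positive connectives, excluded
   middle gives f in T or ~f in T, and (Ci) makes o f in T mean "not both f
   and ~f".  Axioms A1-A6, (Cf), (Ce), (Ccc) and the ~o~ axiom make the
   membership of ~f and ~o f compositional as well, in exactly the way the
   matrix operations prescribe, so the valuation p |-> (p in T, ~p in T,
   ~o p in T) sends every f to (f in T, ~f in T, ~o f in T).  It designates
   Gamma but not a. *)
From Stdlib Require Import Bool Lia Classical ClassicalEpsilon Cantor.

Ltac bool_cases :=
  repeat match goal with x : triple |- _ => destruct x as [[? ?] ?] end;
  repeat match goal with b : bool |- _ => destruct b end;
  unfold inB, designated in *; simpl in *;
  intuition (try discriminate; auto).

Lemma sneg_inB x : inB x -> inB (sneg x).
Proof. bool_cases. Qed.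

Lemma scirc_inB x : inB x -> inB (scirc x).
Proof. bool_cases. Qed.

Lemma sand_inB x y : inB x -> inB y -> inB (sand x y).
Proof. bool_cases. Qed.

Lemma sor_inB x y : inB x -> inB y -> inB (sor x y).
Proof. bool_cases. Qed.

Lemma simp_inB x y : inB x -> inB y -> inB (simp x y).
Proof. bool_cases. Qed.

Lemma eval_inB v f : valuation v -> inB (eval v f).
Proof.
  intros Hv; induction f; simpl;
    auto using sneg_inB, scirc_inB, sand_inB, sor_inB, simp_inB.
Qed.

Lemma axiom_designated v a : valuation v -> LFI3_axiom a -> designated (eval v a).
Proof.
  intros Hv Ha; destruct Ha; unfold Iff, Sneg; simpl;
    repeat match goal with |- context [eval v ?x] =>
      pose proof (eval_inB v x Hv); generalize dependent (eval v x) end;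
    intros; bool_cases.
Qed.

Lemma derivable_models Gamma a : derivable Gamma a -> models Gamma a.
Proof.
  intros Hd v Hv HGamma; induction Hd as [a Ha | a Ha | a b _ IHa _ IHab].
  - auto.
  - apply axiom_designated; assumption.
  - unfold designated in *; simpl in IHab; rewrite IHa in IHab; exact IHab.
Qed.

Fixpoint encode (f : formula) : nat :=
  match f with
  | Var n => to_nat (0, n)
  | Neg a => to_nat (1, encode a)
  | Circ a => to_nat (2, encode a)
  | And a b => to_nat (3, to_nat (encode a, encode b))
  | Or a b => to_nat (4, to_nat (encode a, encode b))
  | Imp a b => to_nat (5, to_nat (encode a, encode b))
  end.

Lemma to_nat_inj p q : to_nat p = to_nat q -> p = q.
Proof. intros H; rewrite <- (cancel_of_to p), <- (cancel_of_to q), H; reflexivity. Qed.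

(* Otherwise [injection] unfolds [to_nat] in the equations it produces. *)
Local Opaque to_nat.

Lemma encode_inj f g : encode f = encode g -> f = g.
Proof.
  revert g; induction f; intros [] H; cbn [encode] in H; apply to_nat_inj in H;
    try discriminate H; injection H as H;
    try (apply to_nat_inj in H; injection H as H H');
    f_equal; auto.
Qed.

Definition extend (S : formula -> Prop) (x : formula) : formula -> Prop :=
  fun y => S y \/ y = x.

Lemma derivable_mono (S T : formula -> Prop) a :
  (forall x, S x -> T x) -> derivable S a -> derivable T a.
Proof.
  intros HST Hd; induction Hd as [a Ha | a Ha | a b _ IHa _ IHab].
  - apply d_hyp, HST, Ha.
  - apply d_ax, Ha.
  - apply d_mp with a; assumption.
Qed.

Lemma derivable_imp_refl S x : derivable S (Imp x x).
Proof.
  apply d_mp with (Imp x (Imp (Imp x x) x)); [apply d_ax, Ax1 |].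
  apply d_mp with (Imp x (Imp x x)); [apply d_ax, Ax1 |].
  apply d_ax, Ax2.
Qed.

Lemma deduction S x y : derivable (extend S x) y -> derivable S (Imp x y).
Proof.
  intros Hd; induction Hd as [y [Hy | ->] | y Hy | y z _ IHy _ IHyz].
  - apply d_mp with y; [apply d_hyp, Hy | apply d_ax, Ax1].
  - apply derivable_imp_refl.
  - apply d_mp with y; [apply d_ax, Hy | apply d_ax, Ax1].
  - apply d_mp with (Imp x (Imp y z)); [exact IHyz |].
    apply d_mp with (Imp x y); [exact IHy | apply d_ax, Ax2].
Qed.

Section Lindenbaum.

Variables (Gamma : formula -> Prop) (a : formula).

Fixpoint lindenbaum_chain (n : nat) : formula -> Prop :=
  match n with
  | 0 => Gamma
  | S m => fun y => lindenbaum_chain m y \/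
                    (encode y = m /\ ~ derivable (extend (lindenbaum_chain m) y) a)
  end.

Definition lindenbaum (y : formula) : Prop := exists n, lindenbaum_chain n y.

Lemma lindenbaum_chain_mono m n y : m <= n -> lindenbaum_chain m y -> lindenbaum_chain n y.
Proof. intros Hle; induction Hle; simpl; auto. Qed.

Lemma derivable_lindenbaum_chain f :
  derivable lindenbaum f -> exists n, derivable (lindenbaum_chain n) f.
Proof.
  intros Hd; induction Hd as [f [n Hn] | f Hf | f g _ [n1 H1] _ [n2 H2]].
  - exists n; apply d_hyp, Hn.
  - exists 0; apply d_ax, Hf.
  - exists (max n1 n2); apply d_mp with f.
    + eapply derivable_mono; [| exact H1].
      intros; eapply lindenbaum_chain_mono; [| eassumption]; lia.
    + eapply derivable_mono; [| exact H2].
      intros; eapply lindenbaum_chain_mono; [| eassumption]; lia.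
Qed.

Hypothesis Gamma_nderiv : ~ derivable Gamma a.

Lemma lindenbaum_chain_nderiv n : ~ derivable (lindenbaum_chain n) a.
Proof.
  induction n as [| n IHn]; [exact Gamma_nderiv |]; intros Hd.
  destruct (classic (exists f, encode f = n /\
                               ~ derivable (extend (lindenbaum_chain n) f) a))
    as [[f [Hcode Hf]] | Hnone].
  - apply Hf; eapply derivable_mono; [| exact Hd].
    intros y [Hy | [Hy _]]; [left; exact Hy | right; apply encode_inj; congruence].
  - apply IHn; eapply derivable_mono; [| exact Hd].
    intros y [Hy | Hy]; [exact Hy | exfalso; apply Hnone; eauto].
Qed.

Lemma lindenbaum_nderiv : ~ derivable lindenbaum a.
Proof.
  intros Hd; destruct (derivable_lindenbaum_chain a Hd) as [n Hn].
  exact (lindenbaum_chain_nderiv n Hn).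
Qed.

Lemma lindenbaum_maximal f : ~ lindenbaum f -> derivable (extend lindenbaum f) a.
Proof.
  intros Hf; apply NNPP; intros Hnd; apply Hf.
  exists (S (encode f)); right; split; [reflexivity |].
  intros Hd; apply Hnd; eapply derivable_mono; [| exact Hd].
  intros y [Hy | Hy]; [left; exists (encode f); exact Hy | right; exact Hy].
Qed.

End Lindenbaum.

Definition saturated (T : formula -> Prop) (a : formula) : Prop :=
  ~ derivable T a /\ forall f, ~ T f -> derivable (extend T f) a.

Lemma lindenbaum_saturated Gamma a :
  ~ derivable Gamma a -> saturated (lindenbaum Gamma a) a.
Proof.
  split; [apply lindenbaum_nderiv | apply lindenbaum_maximal]; assumption.
Qed.

Section SaturatedTheory.

Variables (T : formula -> Prop) (a : formula).
Hypothesis T_sat : saturated T a.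

Lemma saturated_nderiv : ~ derivable T a.
Proof. exact (proj1 T_sat). Qed.

Lemma saturated_imp_goal f : ~ T f -> derivable T (Imp f a).
Proof. intros Hf; apply deduction, (proj2 T_sat), Hf. Qed.

Lemma saturated_derivable f : derivable T f -> T f.
Proof.
  intros Hd; apply NNPP; intros Hf; apply saturated_nderiv.
  apply d_mp with f; [exact Hd | apply saturated_imp_goal, Hf].
Qed.

Lemma saturated_axiom f : LFI3_axiom f -> T f.
Proof. intros Hf; apply saturated_derivable, d_ax, Hf. Qed.

Lemma saturated_mp x y : T x -> T (Imp x y) -> T y.
Proof.
  intros Hx Hxy; apply saturated_derivable.
  apply d_mp with x; apply d_hyp; assumption.
Qed.

Lemma saturated_and x y : T (And x y) <-> T x /\ T y.
Proof.
  split.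
  - intros H; split; eapply saturated_mp; eauto; apply saturated_axiom; constructor.
  - intros [Hx Hy]; apply saturated_mp with y; [exact Hy |].
    apply saturated_mp with x; [exact Hx | apply saturated_axiom; constructor].
Qed.

Lemma saturated_or x y : T (Or x y) <-> T x \/ T y.
Proof.
  split.
  - intros H; apply NNPP; intros Hxy; apply saturated_nderiv.
    apply d_mp with (Or x y); [apply d_hyp, H |].
    apply d_mp with (Imp y a); [apply saturated_imp_goal; tauto |].
    apply d_mp with (Imp x a); [apply saturated_imp_goal; tauto |].
    apply d_ax, Ax8.
  - intros [H | H]; eapply saturated_mp; eauto; apply saturated_axiom; constructor.
Qed.

Lemma saturated_imp x y : T (Imp x y) <-> (T x -> T y).
Proof.
  split; [intros; eapply saturated_mp; eauto |].
  intros H; destruct (proj1 (saturated_or x (Imp x y)) (saturated_axiom _ (Ax9 x y)))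
    as [Hx | Hxy]; [| exact Hxy].
  eapply saturated_mp; [apply H, Hx | apply saturated_axiom; constructor].
Qed.

Lemma saturated_excluded_middle x : T x \/ T (Neg x).
Proof. apply saturated_or, saturated_axiom; constructor. Qed.

Lemma saturated_circ x : T (Circ x) <-> ~ (T x /\ T (Neg x)).
Proof.
  split.
  - intros Hc [Hx Hnx]; apply saturated_nderiv, d_hyp.
    apply saturated_mp with (Neg x); [exact Hnx |].
    apply saturated_mp with x; [exact Hx |].
    apply saturated_mp with (Circ x); [exact Hc | apply saturated_axiom; constructor].
  - intros H; destruct (proj1 (saturated_or _ _) (saturated_axiom _ (Ci x)))
      as [Hc | Hxnx]; [exact Hc |].
    exfalso; apply H, saturated_and, Hxnx.
Qed.

Lemma saturated_iff x y : LFI3_axiom (Iff x y) -> (T x <-> T y).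
Proof.
  intros Hax; apply saturated_axiom, saturated_and in Hax as [Hxy Hyx].
  split; intros; eapply saturated_mp; eauto.
Qed.

Lemma saturated_negneg x : T (Neg (Neg x)) <-> T x.
Proof. split; intros; eapply saturated_mp; eauto; apply saturated_axiom; constructor. Qed.

(* (Ccc) makes [~oox] incompatible with [oox], so by (Ci) [~oox] amounts to [oox] failing. *)
Lemma saturated_neg_circ_circ x :
  T (Neg (Circ (Circ x))) <-> T (Neg (Circ x)) /\ ~ (T x /\ T (Neg x)).
Proof.
  rewrite <- saturated_circ.
  assert (Hccc : T (Circ (Circ (Circ x)))) by (apply saturated_axiom, Ccc).
  rewrite saturated_circ in Hccc.
  pose proof (saturated_circ (Circ x)).
  pose proof (saturated_excluded_middle (Circ (Circ x))).
  tauto.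
Qed.

Definition mem (f : formula) : bool :=
  if excluded_middle_informative (T f) then true else false.

Lemma mem_true f : mem f = true <-> T f.
Proof.
  unfold mem; destruct (excluded_middle_informative (T f)); split; easy.
Qed.

Lemma mem_and x y : mem (And x y) = mem x && mem y.
Proof. apply eq_true_iff_eq; rewrite andb_true_iff, !mem_true; apply saturated_and. Qed.

Lemma mem_or x y : mem (Or x y) = mem x || mem y.
Proof. apply eq_true_iff_eq; rewrite orb_true_iff, !mem_true; apply saturated_or. Qed.

Lemma mem_imp x y : mem (Imp x y) = implb (mem x) (mem y).
Proof.
  apply eq_true_iff_eq; rewrite implb_true_iff, !mem_true; apply saturated_imp.
Qed.

Lemma mem_circ x : mem (Circ x) = negb (mem x && mem (Neg x)).
Proof.
  apply eq_true_iff_eq; rewrite negb_true_iff, <- not_true_iff_false, andb_true_iff,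
    !mem_true; apply saturated_circ.
Qed.

Lemma mem_negneg x : mem (Neg (Neg x)) = mem x.
Proof. apply eq_true_iff_eq; rewrite !mem_true; apply saturated_negneg. Qed.

Lemma mem_neg_circ_circ x :
  mem (Neg (Circ (Circ x))) = mem (Neg (Circ x)) && negb (mem x && mem (Neg x)).
Proof.
  apply eq_true_iff_eq; rewrite andb_true_iff, negb_true_iff, <- not_true_iff_false,
    andb_true_iff, !mem_true; apply saturated_neg_circ_circ.
Qed.

Lemma mem_iff x y : LFI3_axiom (Iff x y) -> mem x = mem y.
Proof. intros Hax; apply eq_true_iff_eq; rewrite !mem_true; apply saturated_iff, Hax. Qed.

Definition canonical (f : formula) : triple := mk (mem f) (mem (Neg f)) (mem (Neg (Circ f))).

Lemma canonical_inB f : inB (canonical f).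
Proof.
  split; simpl.
  - apply orb_true_iff; rewrite !mem_true; apply saturated_excluded_middle.
  - rewrite <- mem_circ; apply orb_true_iff; rewrite !mem_true.
    pose proof (saturated_excluded_middle (Circ f)); tauto.
Qed.

Ltac mem_simpl :=
  repeat first [rewrite mem_and | rewrite mem_or | rewrite mem_imp
               | rewrite mem_circ | rewrite mem_negneg].

(* Reduces a goal about the canonical triples of [x] and [y] to a finite check on B. *)
Ltac check_on_B x y :=
  pose proof (canonical_inB x); pose proof (canonical_inB y); unfold canonical in *;
  generalize dependent (mem (Neg (Circ x))); generalize dependent (mem (Neg x));
  generalize dependent (mem x);
  generalize dependent (mem (Neg (Circ y))); generalize dependent (mem (Neg y));
  generalize dependent (mem y);
  intros; bool_cases.

Lemma canonical_neg x : canonical (Neg x) = sneg (canonical x).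
Proof.
  unfold canonical; rewrite mem_negneg, (mem_iff _ _ (NegCircNeg x)); reflexivity.
Qed.

Lemma canonical_circ x : canonical (Circ x) = scirc (canonical x).
Proof. unfold canonical; rewrite mem_circ, mem_neg_circ_circ; reflexivity. Qed.

Lemma canonical_and x y : canonical (And x y) = sand (canonical x) (canonical y).
Proof.
  unfold canonical at 1; rewrite (mem_iff _ _ (A1 x y)), (mem_iff _ _ (A4 x y)).
  unfold Sneg; mem_simpl; check_on_B x y.
Qed.

Lemma canonical_or x y : canonical (Or x y) = sor (canonical x) (canonical y).
Proof.
  unfold canonical at 1; rewrite (mem_iff _ _ (A2 x y)), (mem_iff _ _ (A5 x y)).
  unfold Sneg; mem_simpl; check_on_B x y.
Qed.

Lemma canonical_imp x y : canonical (Imp x y) = simp (canonical x) (canonical y).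
Proof.
  unfold canonical at 1; rewrite (mem_iff _ _ (A3 x y)), (mem_iff _ _ (A6 x y)).
  unfold Sneg; mem_simpl; check_on_B x y.
Qed.

Lemma eval_canonical f : eval (fun n => canonical (Var n)) f = canonical f.
Proof.
  induction f; simpl; rewrite ?IHf, ?IHf1, ?IHf2;
    auto using canonical_neg, canonical_circ, canonical_and, canonical_or,
      canonical_imp.
Qed.

End SaturatedTheory.

Lemma models_derivable Gamma a : models Gamma a -> derivable Gamma a.
Proof.
  intros Hm; apply NNPP; intros Hnd.
  set (T := lindenbaum Gamma a).
  assert (T_sat : saturated T a) by (apply lindenbaum_saturated, Hnd).
  set (v := fun n => canonical T (Var n)).
  assert (designated_iff : forall f, designated (eval v f) <-> T f).
  { intros f; unfold designated, v; rewrite (eval_canonical T a T_sat).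
    apply mem_true. }
  apply (saturated_nderiv T a T_sat), d_hyp, designated_iff, Hm.
  - intros n; apply (canonical_inB T a T_sat).
  - intros g Hg; apply designated_iff; exists 0; exact Hg.
Qed.

Theorem theorem16 (Gamma : formula -> Prop) (a : formula) :
  derivable Gamma a <-> models Gamma a.
Proof.
  split; [apply derivable_models | apply models_derivable].
Qed.
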